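(* Let $p$ be a prime and let $H(X)=\prod_{j=0}^{p-1}G_p(X-j)$ (which equals $\prod_{i=0}^{p^2-1}(X-i)$). Then for each $k\in\{0,\dots,p-1\}$, $$H(X)\equiv -G_p(X-k)\pmod{(p,X-k)^{p+1}}.$$
   Context: $G_p(X)=\prod_{h=0}^{p-1}(X-hp)$. *)

From HB Require Import structures.
From mathcomp Require Import all_boot all_order all_algebra.
Set Implicit Arguments. Unset Strict Implicit. Unset Printing Implicit Defensive.
Import Order.TTheory GRing.Theory Num.Theory.
Local Open Scope ring_scope.

Definition Gp (p : nat) : {poly int} :=
  \prod_(h < p) ('X - ((h * p)%N)%:R%:P).

Definition shift (f : {poly int}) (k : nat) : {poly int} :=
  f \Po ('X - k%:R%:P).

Definition Hp (p : nat) : {poly int} := \prod_(j < p) shift (Gp p) j.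

(* Membership in the ideal (a, X - c)^n of Z[X]: this ideal is generated by
   the products a^i (X - c)^(n - i), 0 <= i <= n, so f lies in it iff f is a
   Z[X]-linear combination of these generators. *)
Definition in_ideal_pow (a c : int) (n : nat) (f : {poly int}) : Prop :=
  exists q : nat -> {poly int},
    f = \sum_(i < n.+1) (a%:P ^+ i * ('X - c%:P) ^+ (n - i)%N) * q i.

Definition congr_ideal_pow (a c : int) (n : nat) (f g : {poly int}) : Prop :=
  in_ideal_pow a c n (f - g).

From HB Require Import structures.
From mathcomp Require Import all_boot all_order all_algebra.
From mathcomp Require Import zify ring.
From mathcomp Require Import finfield.
Import GRing.Theory.
Local Open Scope ring_scope.

(* Splitting off the factor j = k of H(X) = prod_j G_p(X - j) gives
     H(X) + G_p(X - k) = G_p(X - k) * (1 + prod_(j <> k) G_p(X - j)).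
   The ideal powers I^n, I = (p, X - k), are multiplicative (I^m I^n <= I^(m+n)),
   so it suffices to show
   - G_p(X - k) lies in I^p: it is a product of p linear factors X - k - hp,
     each lying in I since its value at X = k is divisible by p;
   - 1 + prod_(j <> k) G_p(X - j) lies in I: a polynomial lies in I as soon as
     its value at k is divisible by p, and modulo p we have
     G_p(k - j) = (k - j)^p = k - j (Fermat), while prod_(j <> k) (k - j) = -1
     (Wilson's theorem, after reindexing the nonzero residues by j |-> k - j). *)

Section IdealPowers.
Variables (a c : int).
Local Notation I := (in_ideal_pow a c).
Local Notation Y := ('X - c%:P).

Lemma zero_in_ideal_pow n : I n 0.
Proof. by exists (fun=> 0); rewrite big1 // => i _; rewrite mulr0. Qed.

Lemma in_ideal_powD n f g : I n f -> I n g -> I n (f + g).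
Proof.
move=> [q1 ->] [q2 ->]; exists (fun i => q1 i + q2 i).
by rewrite -big_split /=; apply: eq_bigr => i _; rewrite mulrDr.
Qed.

Lemma in_ideal_powMr n f r : I n f -> I n (f * r).
Proof.
move=> [q ->]; exists (fun i => q i * r).
by rewrite big_distrl /=; apply: eq_bigr => i _; rewrite mulrA.
Qed.

Lemma in_ideal_pow_sum n (T : Type) (s : seq T) (P : pred T) (F : T -> {poly int}) :
  (forall i, P i -> I n (F i)) -> I n (\sum_(i <- s | P i) F i).
Proof.
by move=> IF; apply: (big_ind (I n)) => //; [exact: zero_in_ideal_pow | exact: in_ideal_powD].
Qed.

Lemma in_ideal_pow_gen n l : (l <= n)%N -> I n (a%:P ^+ l * Y ^+ (n - l)).
Proof.
move=> le_ln; exists (fun i => (i == l)%:R).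
rewrite (bigD1 (Ordinal (le_ln : (l < n.+1)%N))) //= eqxx mulr1 big1 ?addr0 //.
by move=> i /negPf; rewrite -val_eqE /= => ->; rewrite mulr0.
Qed.

(* I^m * I^n <= I^(m + n): products of generators are generators. *)
Lemma in_ideal_powM m n f g : I m f -> I n g -> I (m + n) (f * g).
Proof.
move=> [q1 ->] [q2 ->]; rewrite big_distrl /=; apply: in_ideal_pow_sum => i _.
rewrite big_distrr /=; apply: in_ideal_pow_sum => j _.
have ltim := ltn_ord i; have ltjn := ltn_ord j.
have -> : a%:P ^+ i * Y ^+ (m - i) * q1 i * (a%:P ^+ j * Y ^+ (n - j) * q2 j)
   = a%:P ^+ (i + j) * Y ^+ (m + n - (i + j)) * (q1 i * q2 j).
  have -> : (m + n - (i + j) = (m - i) + (n - j))%N by lia.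
  by rewrite !exprD; ring.
by apply/in_ideal_powMr/in_ideal_pow_gen; lia.
Qed.

Lemma in_ideal_pow0 f : I 0 f.
Proof. by exists (fun=> f); rewrite big_ord1 /= !expr0 !mul1r. Qed.

Lemma in_ideal_pow_prod n (F : nat -> {poly int}) :
  (forall i, (i < n)%N -> I 1 (F i)) -> I n (\prod_(i < n) F i).
Proof.
elim: n => [|n IHn] IF; first exact: in_ideal_pow0.
rewrite big_ord_recr /= -addn1; apply: in_ideal_powM; last exact: IF.
by apply: IHn => i lt_in; apply: IF; lia.
Qed.

(* A polynomial lies in I = (a, X - c) as soon as a divides its value at c:
   f = (X - c) q + f(c). *)
Lemma in_ideal_root_dvd (f : {poly int}) : (a %| f.[c])%Z -> I 1 f.
Proof.
move=> /dvdzP [d fc_eq].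
have /factor_theorem [q f_eq] : root (f - f.[c]%:P) c.
  by rewrite rootE hornerD hornerN hornerC subrr.
have -> : f = Y * q + a%:P * d%:P.
  by rewrite -polyCM [a * d]mulrC -fc_eq [Y * q]mulrC -f_eq subrK.
apply: in_ideal_powD.
  by have := @in_ideal_pow_gen 1 0 isT; rewrite expr0 mul1r expr1 => /in_ideal_powMr; apply.
by have := @in_ideal_pow_gen 1 1 isT; rewrite subnn expr0 mulr1 expr1 => /in_ideal_powMr; apply.
Qed.

End IdealPowers.

Section PrimeField.
Variable p : nat.
Hypothesis p_pr : prime p.

Lemma prod_Fp (P : pred 'F_p) (F : 'F_p -> 'F_p) :
  \prod_(x : 'F_p | P x) F x = \prod_(i < p | P i%:R) F i%:R.
Proof.
rewrite (eq_bigr (fun x : 'F_p => F (nat_of_ord x)%:R)); last by move=> x _; rewrite natr_Zp.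
rewrite (eq_bigl (fun x : 'F_p => P (nat_of_ord x)%:R)); last by move=> x; rewrite natr_Zp.
rewrite -!(big_mkord (fun i => P i%:R) (fun i => F i%:R)).
by have -> : index_iota 0 (Zp_trunc (pdiv p)).+2 = index_iota 0 p by rewrite Fp_cast.
Qed.

Lemma Fp_nat_inj (i j : nat) :
  (i < p)%N -> (j < p)%N -> ((i%:R : 'F_p) == j%:R) = (i == j).
Proof.
move=> lt_ip lt_jp; apply/idP/idP => [/eqP/(congr1 (@nat_of_ord _))|/eqP-> //].
by rewrite !val_Fp_nat // !modn_small // => ->.
Qed.

Lemma prod_Fp_nonzero : \prod_(y : 'F_p | y != 0) y = -1.
Proof.
rewrite prod_Fp (eq_bigl (fun i : 'I_p => nat_of_ord i != 0%N)); last first.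
  by move=> i; rewrite -[0 : 'F_p]/(0%:R) Fp_nat_inj ?prime_gt0.
have p_gt1 := prime_gt1 p_pr.
case: p p_pr p_gt1 => [|q] // q1_pr _.
rewrite big_mkcond big_ord_recl /= mul1r.
rewrite (eq_bigr (fun i : 'I_q => (i.+1)%:R)) // -natr_prod.
have -> : (\prod_(i < q) i.+1 = q`!)%N by rewrite fact_prod big_add1 /= big_mkord.
have : (q.+1 %| (q`!).+1)%N by rewrite -Wilson ?prime_gt1.
rewrite (dvdn_pcharf (pchar_Fp q1_pr)) mulrS => /eqP fact_eq.
by apply/eqP; rewrite -subr_eq0 opprK addrC fact_eq.
Qed.

(* prod_(j < p, j <> k) (k - j) = -1 in F_p, via the bijection y |-> k - y. *)
Lemma prod_Fp_diff k : (k < p)%N ->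
  \prod_(j < p | nat_of_ord j != k) ((k%:R : 'F_p) - j%:R) = -1.
Proof.
move=> lt_kp; rewrite -prod_Fp_nonzero.
rewrite (reindex_inj (h := fun x : 'F_p => k%:R - x)); last first.
  by move=> x y /= /eqP; rewrite -subr_eq0 opprB addrC subrKA subr_eq0 => /eqP.
by rewrite prod_Fp; apply: eq_bigl => i; rewrite subr_eq0 Fp_nat_inj // eq_sym.
Qed.

(* Modulo p, G_p(k - j) = (k - j)^p = k - j by Fermat's little theorem. *)
Lemma horner_shift_Gp_Fp (j k : nat) :
  ((shift (Gp p) j).[k%:Z])%:~R = (k%:R - j%:R : 'F_p).
Proof.
rewrite /shift horner_comp /Gp horner_prod rmorph_prod /=.
rewrite (eq_bigr (fun _ => (k%:R : 'F_p) - j%:R)); last first.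
  move=> h _; rewrite !hornerE !rmorphB /= mulrz_nat !rmorph_nat natrM.
  by rewrite pchar_Fp_0 // mulr0 subr0.
by rewrite prodr_const card_ord -[X in _ ^+ X](card_Fp p_pr) expf_card.
Qed.

End PrimeField.

(* G_p(X - k) lies in (p, X - k)^p: each of its p factors X - k - hp has
   value -hp at k. *)
Lemma shift_Gp_in_ideal (p k : nat) : in_ideal_pow p k p (shift (Gp p) k).
Proof.
rewrite /shift /Gp rmorph_prod.
apply: (@in_ideal_pow_prod _ _ p (fun h => ('X - ((h * p)%N)%:R%:P) \Po ('X - k%:R%:P)))
  => h _.
apply: in_ideal_root_dvd; rewrite horner_comp !hornerE.
by apply/dvdzP; exists (- h%:R); rewrite natrM !natz; ring.
Qed.

(* The cofactor 1 + prod_(j <> k) G_p(X - j) lies in (p, X - k): modulo p its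
   value at k is 1 + prod_(j <> k) (k - j) = 1 - 1. *)
Lemma cofactor_in_ideal (p k : nat) (p_pr : prime p) (lt_kp : (k < p)%N) :
  in_ideal_pow p k 1 (\prod_(j < p | j != Ordinal lt_kp) shift (Gp p) j + 1).
Proof.
apply: in_ideal_root_dvd.
rewrite (dvdz_pcharf (pchar_Fp p_pr)) hornerD hornerC horner_prod.
rewrite rmorphD rmorph1 rmorph_prod.
rewrite (eq_bigl (fun j : 'I_p => nat_of_ord j != k)); last by move=> j; rewrite -val_eqE.
rewrite (eq_bigr (fun j : 'I_p => (k%:R : 'F_p) - (nat_of_ord j)%:R)).
  by rewrite prod_Fp_diff // addNr.
by move=> j _; exact: (horner_shift_Gp_Fp p p_pr j k).
Qed.

Theorem mainTheorem17 (p : nat) (hp : prime p) (k : nat) (hk : (k < p)%N) :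
  congr_ideal_pow (p%:Z) (k%:Z) p.+1 (Hp p) (- shift (Gp p) k).
Proof.
rewrite /congr_ideal_pow /Hp (bigD1 (Ordinal hk)) //= opprK.
rewrite -[X in _ + X]mulr1 -mulrDr -addn1.
by apply: in_ideal_powM; [exact: shift_Gp_in_ideal | exact: cofactor_in_ideal].
Qed.
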